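(* Let $(X,d)$ be a complete metric space with finite metric dimension, let $\mathcal{D}=\bigcup_j\mathcal{D}^j$, $\mathcal{D}^j=\{Q^j_k\}$, be a dyadic family in $X$ with parameter $\delta\in(0,1)$ and centers $x^j_k$, and let $\mu$ be a Borel measure on $X$ that is positive and finite on $d$-balls. Fix $j$ and set $T_j=\sum_k\mu(Q^j_k)\delta_{x^j_k}$. Fix a constant $C>0$ and a symmetric matrix $(H^j_{ki})$ with positive entries, and let $S_j=\sum_{k,i}w^j_{ki}\delta_{(x^j_k,x^j_i)}$ where $w^j_{ki}=H^j_{ki}(\mu(Q^j_k)+\mu(Q^j_i))$ if $k\neq i$ and $d(x^j_k,x^j_i)<C\delta^j$, and $w^j_{ki}=0$ otherwise. Then (1) for $\Phi\in\mathscr{C}_c(X\times X)$, $$Kir_j\Phi(x^j_k)=\frac1{\mu(Q^j_k)}\sum_{\{i\neq k:d(x^j_i,x^j_k)<C\delta^j\}}\Phi(x^j_k,x^j_i)(\mu(Q^j_k)+\mu(Q^j_i))H^j_{ki};$$ (2) for $f$ continuous and bounded on $X$, $$\Delta_jf(x^j_k)=\sum_{\{i:d(x^j_i,x^j_k)<C\delta^j\}}(f(x^j_i)-f(x^j_k))\Big(1+\frac{\mu(Q^j_i)}{\mu(Q^j_k)}\Big)H^j_{ki}.$$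
   Context: $(X,d)$ has finite metric (Assouad) dimension: there is $N$ such that no ball of radius $r$ contains more than $N$ points of any $r/2$-disperse set (a set $D$ is $\varepsilon$-disperse if $d(x,y)\ge\varepsilon$ for distinct $x,y\in D$). A dyadic family is a countable family $\mathcal{D}=\bigcup_{j\in\mathbb{Z}}\mathcal{D}^j$ of Borel sets for which there are $0<\delta<1$, $0<a<b$, $M\in\mathbb{N}$ and points $\{x^j_k\}$ such that: each $\mathcal{D}^j=\{Q^j_k\}$ is a disjoint partition of $X$; $B_d(x^j_k,a\delta^j)\subseteq Q^j_k\subseteq B_d(x^j_k,b\delta^j)$; each $Q^j_k$ is the disjoint union of at most $M$ sets of $\mathcal{D}^{j+1}$. $\delta_p$ is the unit point mass. With $\mathscr{S}_1=\mathscr{C}_c(X)$, $\mathscr{S}_2=\mathscr{C}_c(X\times X)$, $Kir_j\Phi$ is a function on $\{x^j_k\}$ with $\int\varphi\,Kir_j\Phi\,dT_j=\iint\varphi(x)\Phi(x,y)\,dS_j(x,y)$ for all $\varphi\in\mathscr{S}_1$, and $\Delta_jf=Kir_j(f(y)-f(x))$ with the same identity. *)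

From HB Require Import structures.
From mathcomp Require Import all_boot all_order all_algebra.
From mathcomp Require Import all_classical all_reals all_analysis.
Set Implicit Arguments. Unset Strict Implicit. Unset Printing Implicit Defensive.
Import Order.TTheory GRing.Theory Num.Theory.
Import numFieldTopology.Exports numFieldNormedType.Exports.
Local Open Scope classical_set_scope.
Local Open Scope ring_scope.

(* X carried as a (nonempty, i.e. pointed) [metricType R]: d = mdist.
   Pointedness is required by MathComp-Analysis' measurable types. *)
HB.structure Definition PointedMetric (R : numDomainType) :=
  {T of Metric R T & Pointed T}.
Notation pmetricType := PointedMetric.type.

Notation borel T := (@g_sigma_algebraType (T : pointedType) (@open T)).

Definition complete_space (T : uniformType) :=
  forall F : set_system T, ProperFilter F -> cauchy F -> exists x : T, F --> x.

Definition disperse (R : realType) (X : metricType R) (eps : R) (D : set X) :=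
  forall x y, D x -> D y -> x <> y -> eps <= mdist x y.

Definition finite_metric_dimension (R : realType) (X : metricType R) :=
  exists N : nat, forall (x : X) (r : R) (D : set X),
    D `<=` [set y | mdist x y < r] -> disperse (r / 2) D ->
    exists s : seq X, (size s <= N)%N /\ D `<=` [set` s].

(* Dyadic family: level j (an integer) is indexed by the countable index set K j
   (a set of naturals); Q j k is the cube, x j k its center. *)
Definition dyadic_family (R : realType) (X : pmetricType R)
  (K : int -> set nat) (Q : int -> nat -> set X) (x : int -> nat -> X)
  (delta a b : R) (M : nat) :=
  [/\ 0 < delta < 1, 0 < a, a < b &
  forall j : int,
  [/\ (forall k, K j k -> measurable (Q j k : set (borel X))),
      (forall k k', K j k -> K j k' -> k <> k' -> Q j k `&` Q j k' = set0),
      (forall y, exists2 k, K j k & Q j k y),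
      (forall k, K j k ->
         [set y | mdist (x j k) y < a * delta ^ j] `<=` Q j k /\
         Q j k `<=` [set y | mdist (x j k) y < b * delta ^ j]) &
      (forall k, K j k -> exists s : seq nat,
         [/\ (size s <= M)%N, (forall i, i \in s -> K (j + 1) i) &
             Q j k = \bigcup_(i in [set` s]) Q (j + 1) i])]].

Definition Cc (R : realType) (T : topologicalType) (f : T -> R) :=
  continuous f /\ exists C : set T, compact C /\ forall t, ~ C t -> f t = 0.

Definition Cb (R : realType) (T : topologicalType) (f : T -> R) :=
  continuous f /\ exists B : R, forall t, `|f t| <= B.

Definition wght (R : realType) (X : metricType R) (m : nat -> R) (x : nat -> X)
  (H : nat -> nat -> R) (Cdj : R) (k i : nat) : R :=
  if (k != i) && (mdist (x k) (x i) < Cdj) then H k i * (m k + m i) else 0.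

(* integral of psi against T_j = sum_k m k delta_{x k}  (finitely supported sum) *)
Definition int_T (R : realType) (X : metricType R) (Kj : set nat) (m : nat -> R)
  (x : nat -> X) (psi : nat -> R) : R :=
  \sum_(k \in Kj) m k * psi k.

(* integral of Psi against S_j = sum_{k,i} w k i delta_{(x k, x i)} *)
Definition int_S (R : realType) (Kj : set nat) (w : nat -> nat -> R)
  (Psi : nat -> nat -> R) : R :=
  \sum_(p \in Kj `*` Kj) w p.1 p.2 * Psi p.1 p.2.

(* g (a function on the centers x k, k in Kj) is Kir_j Phi:
   int phi g dT_j = iint phi(x) Phi(x,y) dS_j(x,y) for all phi in C_c(X). *)
Definition is_Kir (R : realType) (X : metricType R) (Kj : set nat) (m : nat -> R)
  (x : nat -> X) (w : nat -> nat -> R) (Phi : X * X -> R) (g : nat -> R) :=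
  forall phi : X -> R, Cc phi ->
    int_T Kj m x (fun k => phi (x k) * g k) =
    int_S Kj w (fun k i => phi (x k) * Phi (x k, x i)).

(* The centres x^j_k are (a delta^j)-separated, since the ball of radius
   a delta^j about each centre lies in its own cube.  Finite metric dimension
   then makes every neighbourhood {i : d(x_i, x_k) < C delta^j} finite and
   every ball totally bounded, hence relatively compact as X is complete; and a
   compactly supported phi is nonzero at only finitely many centres.  So both
   sides of the identity defining Kir_j Phi = g are finite sums, and it reads
     sum_k phi(x_k) [mu(Q_k) g_k - sum_i w_ki Phi(x_k, x_i)] = 0.
   Testing it with the bump max(0, a delta^j - d(x_k, .)), which vanishes at
   every other centre, isolates the k-th bracket and gives (1); conversely (1)
   makes every bracket vanish.  (2) is (1) for Phi(x, y) = f(y) - f(x). *)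

From HB Require Import structures.
From mathcomp Require Import all_boot all_order all_algebra.
From mathcomp Require Import all_classical all_reals all_analysis.
From mathcomp Require Import ring lra.
From mathcomp Require finmap.
Import Order.TTheory GRing.Theory Num.Theory.
Import numFieldTopology.Exports numFieldNormedType.Exports.
Local Open Scope classical_set_scope.
Local Open Scope ring_scope.
Set Implicit Arguments.
Unset Strict Implicit.
Unset Printing Implicit Defensive.

Definition separated (R : realType) (X : metricType R) (I : Type) (P : set I)
    (f : I -> X) (r : R) :=
  forall i i', P i -> P i' -> mdist (f i) (f i') < r -> i = i'.

Section MetricFacts.
Variables (R : realType) (X : metricType R).

Lemma open_mball (c : X) (r : R) : open [set y | mdist c y < r].
Proof.
rewrite openE => y /= cy.
have r0 : 0 < r - mdist c y by rewrite subr_gt0.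
apply: filterS (nbhsx_ballx y _ r0) => z; rewrite ballEmdist /= => yz.
by apply: le_lt_trans (metric_triangle _ y _) _; rewrite -ltrBrDl.
Qed.

Lemma finite_separated_net (I : Type) (P : set I) (f : I -> X) (s : seq X)
    (t : R) :
  (forall i, P i -> exists2 e, e \in s & mdist e (f i) < t) ->
  separated P f (2 * t) -> finite_set P.
Proof.
move=> net sep.
pose near_e e := [set i | P i /\ mdist e (f i) < t].
apply: (@sub_finite_set _ _ (\bigcup_(e in [set` s]) near_e e)).
  by move=> i Pi; have [e es et] := net i Pi; exists e.
apply: bigcup_finite; first exact: finite_seq.
move=> e _; have [[i0 [Pi0 ei0]]|none] := pselect (exists i, near_e e i).
  apply: (@sub_finite_set _ _ [set i0]); last exact: finite_set1.
  move=> i [Pi ei]; apply: sep => //.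
  apply: le_lt_trans (metric_triangle _ e _) _.
  by rewrite metric_sym mulr2n mulrDl mul1r ltrD.
apply: (@sub_finite_set _ _ set0) => [i ei|]; last exact: finite_set0.
by apply: none; exists i.
Qed.

Lemma ultra_net_ball (F : set_system X) (s : seq X) (e : R) : UltraFilter F ->
  F [set z | exists2 y, y \in s & mdist y z < e] -> exists y, F (ball y e).
Proof.
move=> UF; elim: s => [|y s IH] Fs.
  have : F set0 by apply: filterS Fs => z [].
  by move/filter_not_empty.
have [Fy|FyC] := in_ultra_setVsetC (ball y e) UF; first by exists y.
apply: IH; apply: filterS (filterI Fs FyC) => z [[y' + yz] nyz].
rewrite inE => /orP [/eqP eq|y's]; last by exists y'.
by exfalso; apply: nyz; rewrite ballEmdist -eq.
Qed.

Hypothesis fmd : finite_metric_dimension X.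

(* A maximal [r/2]-separated subset of the ball is an [r/2]-net; maximal ones
   exist because such subsets have at most N points. *)
Lemma fmd_half_net (c : X) (r : R) : 0 < r -> exists s : seq X,
  forall y, mdist c y < r -> exists2 e, e \in s & mdist e y < r / 2.
Proof.
move: fmd => [N HN] r0.
pose good (E : seq X) := [/\ uniq E, (forall e, e \in E -> mdist c e < r) &
   (forall e e', e \in E -> e' \in E -> e <> e' -> r / 2 <= mdist e e')].
have good_size E : good E -> (size E <= N)%N.
  case=> uE inE sepE; have [s [sN sub]] := HN c r [set` E] inE sepE.
  by apply: leq_trans sN; apply: uniq_leq_size uE _ => e /sub.
pose P n := `[< exists E, good E /\ size E = n >].
have P0 : exists n, P n by exists 0%N; apply/asboolP; exists [::].
have PN n : P n -> (n <= N)%N by move=> /asboolP [E [/good_size + <-]].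
case: (ex_maxnP P0 PN) => n /asboolP [E [[uE inEr sepE] <-]] maxE.
exists E => y cy; apply: contrapT => far.
have farE e : e \in E -> r / 2 <= mdist e y.
  by move=> eE; rewrite leNgt; apply/negP => lt; apply: far; exists e.
have yE : y \notin E.
  by apply/negP => /farE; rewrite mdistxx leNgt divr_gt0.
suff : P (size (y :: E)) by move/maxE; rewrite /= ltnn.
apply/asboolP; exists (y :: E); split => //; split.
- by rewrite /= yE uE.
- by move=> e; rewrite inE => /orP [/eqP ->|/inEr].
- move=> e e'; rewrite !inE => /orP [/eqP ->|eE] /orP [/eqP ->|e'E] ne //.
  + by rewrite metric_sym; apply: farE.
  + exact: farE.
  + exact: sepE.
Qed.

Lemma fmd_net (c : X) (r eps : R) : 0 < r -> 0 < eps -> exists s : seq X,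
  forall y, mdist c y < r -> exists2 e, e \in s & mdist e y < eps.
Proof.
move=> r0 eps0.
have dyadic_net n : exists s : seq X,
    forall y, mdist c y < r -> exists2 e, e \in s & mdist e y < r / 2 ^+ n.
  elim: n => [|n [s Hs]].
    by exists [:: c] => y cy; exists c; rewrite ?inE ?expr0 ?divr1.
  have rn0 : 0 < r / 2 ^+ n by rewrite divr_gt0 // exprn_gt0.
  have [f Hf] := choice (fun e => fmd_half_net e rn0).
  exists (flatten (map f s)) => y /Hs [e es ey].
  have [e' e'f e'y] := Hf e y ey.
  by exists e'; [apply/flatten_mapP; exists e|rewrite exprSr invfM mulrA].
pose n := Num.bound (r / eps).
have [s Hs] := dyadic_net n; exists s => y /Hs [e es ey]; exists e => //.
apply: lt_trans ey _; rewrite ltr_pdivrMr ?exprn_gt0 // mulrC -ltr_pdivrMr //.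
exact: upper_nthrootP.
Qed.

Lemma fmd_separated_finite (I : Type) (P : set I) (f : I -> X) (c : X)
    (r rho : R) :
  0 < r -> 0 < rho -> (forall i, P i -> mdist c (f i) < r) ->
  separated P f rho -> finite_set P.
Proof.
move=> r0 rho0 inb sep.
have [s Hs] := fmd_net c r0 (divr_gt0 rho0 (@ltr0Sn R 1)).
apply: (finite_separated_net (f := f) (s := s) (t := rho / 2)).
  by move=> i /inb /Hs.
by rewrite [2 * _]mulrC divfK.
Qed.

Hypothesis cpl : complete_space X.

Lemma compact_closure_mball (c : X) (rho : R) : 0 < rho ->
  compact (closure [set y | mdist c y < rho]).
Proof.
move=> rho0; rewrite compact_ultra => F UF Fcl.
have rho20 : 0 < 2 * rho by rewrite mulr_gt0.
have Fball : F [set y | mdist c y < 2 * rho].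
  apply: filterS Fcl; rewrite -!ballEmdist.
  by have := subset_closure_half (x := c) rho20; rewrite [2 * rho]mulrC mulfK.
have cauchyF : cauchy F.
  apply: cauchy_exP => e e0; have [s Hs] := fmd_net c rho20 e0.
  by apply: (ultra_net_ball (s := s) UF); apply: filterS Fball => z /Hs.
have [p Fp] := cpl _ cauchyF.
exists p; split => //.
exact: (@closed_cvg _ _ F _ id _ (@closed_closure _ _) Fcl p Fp).
Qed.

Lemma mball_bump_Cc (c : X) (rho : R) : 0 < rho ->
  Cc (fun y => Num.max 0 (rho - mdist c y)).
Proof.
move=> rho0; split.
  move=> y; apply/cvgrPdist_lt => e e0.
  apply: filterS (nbhsx_ballx y _ e0) => t; rewrite ballEmdist /= => yt.
  have t1 := metric_triangle c y t.
  have t2 := metric_triangle c t y; rewrite (metric_sym t y) in t2.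
  rewrite ltr_norml; case: (leP 0 (rho - mdist c y)) => h1;
    case: (leP 0 (rho - mdist c t)) => h2; apply/andP; split; lra.
exists (closure [set y | mdist c y < rho]).
split; first exact: compact_closure_mball.
move=> t nt; apply/max_idPl; rewrite subr_le0 leNgt; apply/negP => ct.
exact/nt/subset_closure.
Qed.

Lemma separated_bump (I : Type) (P : set I) (f : I -> X) (r : R) :
  0 < r -> separated P f r -> forall k, P k ->
  exists phi : X -> R, [/\ Cc phi, phi (f k) != 0 &
                          forall i, P i -> i <> k -> phi (f i) = 0].
Proof.
move=> r0 sep k Pk; exists (fun y => Num.max 0 (r - mdist (f k) y)); split.
- exact: mball_bump_Cc.
- by rewrite mdistxx subr0 gt_eqF // lt_max r0 orbT.
- move=> i Pi ik; apply/max_idPl; rewrite subr_le0 leNgt; apply/negP => lt.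
  exact/ik/esym/sep.
Qed.

End MetricFacts.

Lemma measurable_mball (R : realType) (X : pmetricType R) (c : X) (r : R) :
  measurable ([set z | mdist c z < r] : set (borel X)).
Proof. by apply: sub_gen_smallest; exact: open_mball. Qed.

(* Pointedness is needed only by [compact_cover]. *)
Lemma Cc_separated_finite_support (R : realType) (X : pmetricType R) (I : Type)
    (P : set I) (f : I -> X) (r : R) (phi : X -> R) :
  0 < r -> separated P f r -> Cc phi ->
  finite_set [set i | P i /\ phi (f i) != 0].
Proof.
move=> r0 sep [_ [S [cS S0]]].
have r20 : 0 < r / 2 by rewrite divr_gt0.
rewrite compact_cover in cS.
have [D _ cov] : finite_subset_cover S (fun y => [set z | mdist y z < r / 2]) S.
  apply: cS => [y _|z Sz]; first exact: open_mball.
  by exists z => //=; rewrite mdistxx.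
apply: (finite_separated_net (f := f) (s := finmap.enum_fset D) (t := r / 2)).
  move=> i [Pi phii]; have [|e eD ei] := cov (f i); last by exists e.
  by apply: contrapT => nS; move: phii; rewrite S0 // eqxx.
move=> i i' [Pi _] [Pi' _]; rewrite [2 * _]mulrC divfK //; exact: sep.
Qed.

Section KirchhoffLevel.
Variables (R : realType) (X : metricType R) (Kj : set nat) (x : nat -> X)
  (m : nat -> R) (H : nat -> nat -> R) (rho : R).

Local Notation w := (wght m x H rho).
Local Notation kir_sum Phi k :=
  (\sum_(i \in [set i | Kj i /\ i <> k /\ mdist (x i) (x k) < rho])
     Phi (x k, x i) * (m k + m i) * H k i).

Lemma wght_row_sum (Phi : X * X -> R) (k : nat) (P : set nat) (c : R) : Kj k ->
  [set i | Kj i /\ i <> k /\ mdist (x i) (x k) < rho] `<=` P -> P `<=` Kj ->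
  \sum_(i \in P) w k i * (c * Phi (x k, x i)) = c * kir_sum Phi k.
Proof.
move=> Kk AP PK; rewrite -(fsbig_widen _ _ _ AP); last first.
  move=> i [Pi nAi]; rewrite /preimage /= /wght.
  case: ifP => [/andP [ki lt]|]; last by rewrite mul0r.
  exfalso; apply: nAi; split; first exact: PK.
  by split; [apply/eqP; rewrite eq_sym|rewrite metric_sym].
rewrite mulr_fsumr; apply: eq_fsbigr => i /set_mem [Ki [ik lt]].
rewrite /wght ifT; first by ring.
by rewrite eq_sym; apply/andP; split; [exact/eqP|rewrite metric_sym].
Qed.

Lemma int_T_support (psi : nat -> R) (P : set nat) : P `<=` Kj ->
  (forall k, Kj k -> ~ P k -> psi k = 0) ->
  int_T Kj m x psi = \sum_(k \in P) m k * psi k.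
Proof.
move=> PK psi0; rewrite /int_T (fsbig_widen _ _ _ PK) // => k [Kk nPk].
by rewrite /preimage /= psi0 ?mulr0.
Qed.

Hypothesis finite_nbhd :
  forall k, finite_set [set i | Kj i /\ mdist (x i) (x k) < rho].

Lemma int_S_support (Phi : X * X -> R) (phi : X -> R) (P : set nat) :
  finite_set P -> P `<=` Kj -> (forall k, Kj k -> ~ P k -> phi (x k) = 0) ->
  int_S Kj w (fun k i => phi (x k) * Phi (x k, x i)) =
  \sum_(k \in P) phi (x k) * kir_sum Phi k.
Proof.
move=> finP PK phi0.
pose N := \bigcup_(k in P) [set i | Kj i /\ mdist (x i) (x k) < rho].
have finN : finite_set N by apply: bigcup_finite => // k _; exact: finite_nbhd.
have NK : N `<=` Kj by move=> i [k _ []].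
rewrite /int_S -(fsbig_widen (P `*` N)); first last.
- move=> [k i] [[/= Kk Ki] nPN]; rewrite /preimage /=.
  have [Pk|nPk] := pselect (P k); last by rewrite phi0 ?mul0r ?mulr0.
  rewrite /wght; case: ifP => [/andP [_ lt]|]; last by rewrite mul0r.
  exfalso; apply: nPN; split => //.
  by exists k => //; split; rewrite 1?metric_sym.
- by move=> [k i] [/PK ? /NK ?].
rewrite -(pair_fsbig _ (fun k i => w k i * (phi (x k) * Phi (x k, x i)))) //.
apply: eq_fsbigr => k /set_mem Pk; apply: wght_row_sum => [||//].
- exact: PK.
- by move=> i [Ki [_ lt]]; exists k.
Qed.

Hypothesis m_neq0 : forall k, Kj k -> m k != 0.
Hypothesis Cc_finite_support :
  forall phi : X -> R, Cc phi -> finite_set [set k | Kj k /\ phi (x k) != 0].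
Hypothesis Cc_bump : forall k, Kj k -> exists phi : X -> R,
  [/\ Cc phi, phi (x k) != 0 & forall i, Kj i -> i <> k -> phi (x i) = 0].

Lemma is_KirP (Phi : X * X -> R) (g : nat -> R) :
  is_Kir Kj m x w Phi g <->
  (forall k, Kj k -> g k = (m k)^-1 * kir_sum Phi k).
Proof.
split => [Kir k Kk|gE phi Cc_phi].
  have [phi [Cc_phi phik phi0]] := Cc_bump Kk.
  have k_Kj : [set k] `<=` Kj by move=> _ ->.
  have := Kir phi Cc_phi.
  rewrite (int_T_support k_Kj); last by move=> i Ki ik; rewrite phi0 // mul0r.
  rewrite (int_S_support Phi (finite_set1 k) k_Kj phi0) !fsbig_set1 => Kir_k.
  apply: (mulfI (mulf_neq0 (m_neq0 Kk) phik)).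
  by rewrite -mulrA Kir_k; field; rewrite m_neq0.
pose P := [set k | Kj k /\ phi (x k) != 0].
have PK : P `<=` Kj by move=> k [].
have phi0 k : Kj k -> ~ P k -> phi (x k) = 0.
  by move=> Kk nPk; apply/eqP; apply: contrapT => /negP phik; exact: nPk.
rewrite /is_Kir (int_T_support PK); last first.
  by move=> k Kk /phi0 ->; rewrite // mul0r.
rewrite (int_S_support _ (Cc_finite_support Cc_phi) PK phi0).
apply: eq_fsbigr => k /set_mem [Kk _]; rewrite gE //.
by field; rewrite m_neq0.
Qed.

(* Unlike (1), the sum here includes the term [i = k], which vanishes. *)
Lemma is_Kir_differenceP (f : X -> R) (g : nat -> R) :
  is_Kir Kj m x w (fun p => f p.2 - f p.1) g <->
  (forall k, Kj k -> g k =
     \sum_(i \in [set i | Kj i /\ mdist (x i) (x k) < rho])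
        (f (x i) - f (x k)) * (1 + m i / m k) * H k i).
Proof.
have sumE k : Kj k -> (m k)^-1 * kir_sum (fun p => f p.2 - f p.1) k =
    \sum_(i \in [set i | Kj i /\ mdist (x i) (x k) < rho])
      (f (x i) - f (x k)) * (1 + m i / m k) * H k i.
  move=> Kk; rewrite mulr_fsumr /=.
  rewrite (fsbig_widen _ [set i | Kj i /\ mdist (x i) (x k) < rho]); first last.
  - move=> i [[Ki lt] nA]; rewrite /preimage /=.
    suff -> : i = k by rewrite subrr !mul0r mulr0.
    by apply: contrapT => ik; apply: nA.
  - by move=> i [Ki [_ lt]].
  by apply: eq_fsbigr => i _; field; rewrite m_neq0.
by rewrite is_KirP; split => gE k Kk; rewrite gE // sumE.
Qed.

End KirchhoffLevel.

Section DyadicLevel.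
Variables (R : realType) (X : pmetricType R) (K : int -> set nat)
  (Q : int -> nat -> set X) (x : int -> nat -> X) (delta a b : R) (M : nat).
Hypothesis dyadic : dyadic_family K Q x delta a b M.

Lemma dyadic_scale_gt0 (j : int) : 0 < delta ^ j.
Proof. by case: dyadic => /andP [delta0 _] _ _ _; exact: exprz_gt0. Qed.

Lemma dyadic_inner_radius_gt0 (j : int) : 0 < a * delta ^ j.
Proof. by case: dyadic => _ a0 _ _; rewrite mulr_gt0 // dyadic_scale_gt0. Qed.

Lemma dyadic_centers_separated (j : int) :
  separated (K j) (x j) (a * delta ^ j).
Proof.
case: dyadic => _ _ _ /(_ j) [_ disj _ balls _] k k' Kk Kk' near.
apply: contrapT => kk'.
have : (Q j k `&` Q j k') (x j k').
  split; first exact: (balls k Kk).1.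
  by apply: (balls k' Kk').1; rewrite /= mdistxx dyadic_inner_radius_gt0.
by rewrite disj.
Qed.

Lemma dyadic_cube_measure_gt0 (mu : {measure set (borel X) -> \bar R})
    (j : int) (k : nat) :
  (forall (y : X) (r : R), 0 < r ->
     (0 < mu [set z | (mdist y z < r)%R] < +oo)%E) ->
  K j k -> 0 < fine (mu (Q j k)).
Proof.
move=> mu_ball Kk; case: dyadic => _ a0 ab /(_ j) [cube_meas _ _ balls _].
have [inner outer] := balls k Kk.
have outer_gt0 : 0 < b * delta ^ j.
  by rewrite mulr_gt0 ?dyadic_scale_gt0 ?(lt_trans a0 ab).
have mu_le A B : measurable A -> measurable B -> A `<=` B -> (mu A <= mu B)%E.
  by move=> mA mB; apply: le_measure; rewrite inE.
apply: fine_gt0; apply/andP; split.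
  case/andP: (mu_ball (x j k) _ (dyadic_inner_radius_gt0 j)) => + _.
  move/lt_le_trans; apply; apply: mu_le inner.
  - exact: measurable_mball.
  - exact: cube_meas.
case/andP: (mu_ball (x j k) _ outer_gt0) => _; apply: le_lt_trans.
by apply: mu_le outer; [exact: cube_meas|exact: measurable_mball].
Qed.

End DyadicLevel.

Theorem proposition3p3 (R : realType) (X : pmetricType R)
  (K : int -> set nat) (Q : int -> nat -> set X) (x : int -> nat -> X)
  (delta a b : R) (M : nat)
  (mu : {measure set (borel X) -> \bar R})
  (j : int) (C : R) (H : nat -> nat -> R) :
  complete_space X ->
  finite_metric_dimension X ->
  dyadic_family K Q x delta a b M ->
  (forall (y : X) (r : R), 0 < r ->
     (0 < mu [set z | (mdist y z < r)%R] < +oo)%E) ->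
  0 < C ->
  (forall k i, K j k -> K j i -> H k i = H i k) ->
  (forall k i, K j k -> K j i -> 0 < H k i) ->
  let m := fun k => fine (mu (Q j k)) in
  let w := wght m (x j) H (C * delta ^ j) in
  (forall Phi : X * X -> R, Cc Phi -> forall g : nat -> R,
     is_Kir (K j) m (x j) w Phi g <->
     (forall k, K j k -> g k =
        (m k)^-1 *
        \sum_(i \in [set i | K j i /\ i <> k /\ mdist (x j i) (x j k) < C * delta ^ j])
           Phi (x j k, x j i) * (m k + m i) * H k i)) /\
  (forall f : X -> R, Cb f -> forall g : nat -> R,
     is_Kir (K j) m (x j) w (fun p => f p.2 - f p.1) g <->
     (forall k, K j k -> g k =
        \sum_(i \in [set i | K j i /\ mdist (x j i) (x j k) < C * delta ^ j])
           (f (x j i) - f (x j k)) * (1 + m i / m k) * H k i)).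
Proof.
move=> complete fmd dyadic mu_ball C0 _ _ m w.
have r0 := dyadic_inner_radius_gt0 dyadic j.
have sep := dyadic_centers_separated dyadic (j := j).
have Cdelta0 : 0 < C * delta ^ j.
  by rewrite mulr_gt0 // (dyadic_scale_gt0 dyadic).
have nbhd_finite k :
    finite_set [set i | K j i /\ mdist (x j i) (x j k) < C * delta ^ j].
  apply: (fmd_separated_finite fmd (f := x j) (c := x j k) Cdelta0 r0).
  - by move=> i [_]; rewrite metric_sym.
  - by move=> i i' [Ki _] [Ki' _]; exact: sep.
have m_neq0 k : K j k -> m k != 0.
  by move=> Kk; rewrite gt_eqF // (dyadic_cube_measure_gt0 dyadic mu_ball Kk).
have support (phi : X -> R) :
    Cc phi -> finite_set [set k | K j k /\ phi (x j k) != 0].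
  exact: Cc_separated_finite_support r0 sep.
have bump := separated_bump fmd complete r0 sep.
split=> [Phi _ g|f _ g].
- exact: is_KirP.
- exact: is_Kir_differenceP.
Qed.
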